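(* Let $\mathcal A=(Q,\Sigma,\delta,\rho)$ be a connected bireversible Mealy automaton whose labeled orbit tree $\mathfrak t(\mathcal A)$ has no active self-liftable branch, let $\mathfrak j$ be a jungle tree of $\mathfrak t(\mathcal A)$ with trunk of length $n$, and let $S$ be a liana covering up $\mathfrak j$. Then for all $\mathbf t,\mathbf u,\mathbf v\in Q^*$ with $\mathbf{tuv}\in S$, there exists $\mathbf w\in Q^*$ such that $\mathbf{tuvwu}\in S$.
   Context: Mealy automata. A Mealy automaton is $\mathcal A=(Q,\Sigma,\delta,\rho)$ with $Q,\Sigma$ finite non-empty sets, $\delta=(\delta_i\colon Q\to Q)_{i\in\Sigma}$, $\rho=(\rho_x\colon\Sigma\to\Sigma)_{x\in Q}$; it has a transition $x\xrightarrow{i\mid\rho_x(i)}\delta_i(x)$ for each $x,i$. It is invertible if each $\rho_x$ is a permutation of $\Sigma$, reversible if each $\delta_i$ is a permutation of $Q$, bireversible if it is invertible, reversible, and for each $j\in\Sigma$ the map $x\mapsto\delta_{\rho_x^{-1}(j)}(x)$ is a permutation of $Q$. It is connected if the directed graph on $Q$ with edges $x\to\delta_i(x)$ is connected. Extensions: $\rho_x(i\mathbf s)=\rho_x(i)\rho_{\delta_i(x)}(\mathbf s)$ on $\Sigma^*$; for $\mathbf u=x_1\cdots x_m$, $\rho_{\mathbf u}=\rho_{x_m}\circ\cdots\circ\rho_{x_1}$; dually $\delta_i(x\mathbf u)=\delta_i(x)\delta_{\rho_x(i)}(\mathbf u)$ on $Q^*$, $\delta_{i_1\cdots i_m}=\delta_{i_m}\circ\cdots\circ\delta_{i_1}$.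 The $n$-th power $\mathcal A^n$ has stateset $Q^n$ and transitions $\mathbf u\xrightarrow{i\mid\rho_{\mathbf u}(i)}\delta_i(\mathbf u)$; for reversible $\mathcal A$ its connected components are the orbits of $Q^n$ under the maps $\delta_{\mathbf s}$, $\mathbf s\in\Sigma^*$. Orbit tree. For reversible $\mathcal A$, $\mathfrak t(\mathcal A)$ is the rooted tree whose vertices at level $n\ge0$ are the connected components of $\mathcal A^n$, with an edge from the component of $\mathbf u\in Q^n$ to the component of $\mathbf ux$ for all $\mathbf u\in Q^n$, $x\in Q$; the edge $C\to D$ is labeled $\#D/\#C$. Paths go downward; $\top,\bot$ denote first and last vertex of a path; the level of an edge/path is that of its top vertex. A word in $Q^*\cup Q^\omega$ represents the initial path through the components of its prefixes. Edge $e$ is liftable to edge $f$ if every word of $\bot(e)$ has a suffix in $\bot(f)$; a path $(e_i)_{i\in I}$ is liftable to $(f_i)_{i\in I}$ if each $e_i$ is liftable to $f_i$. An edge $f$ is a legitimate child of $e$ if $\top(f)=\bot(e)$ and $f$ is liftable to $e$. A path or subtree $\mathfrak s$ is $k$-self-liftable ($k>0$) if for every $i\ge0$ every path in $\mathfrak s$ starting at level $i+k$ is liftable to a path in $\mathfrak s$ starting at level $i$; self-liftable if $k$-self-liftable for some $k>0$. A branch is an infinite initial path; active if its label sequence is not eventually constantly $1$. Jungle trees. Let $\mathbf e$ be a finite 1-self-liftable initial path of length $n$ whose last edge has at least two legitimate children, all of label $1$. The jungle tree $\mathfrak j(\mathbf e)$ consists of $\mathbf e$ (its trunk) together with all edges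 that are descendants of $\bot(\mathbf e)$ and liftable to the last edge of $\mathbf e$. Stems are the words of $\bot(\mathbf e)\subseteq Q^n$. A $\mathfrak j$-word is a word of $Q^*\cup Q^\omega$ representing an initial path of $\mathfrak j$. A liana covering up $\mathfrak j$ is a set $S=\mathbf w L_{\mathbf w}$ (together with the prefixes of $\mathbf w$) of $\mathfrak j$-words, where $\mathbf w\in Q^n$ is a stem and $L_{\mathbf w}\subseteq Q^*\cup Q^\omega$ is prefix-closed, such that each vertex of $\mathfrak j$ is represented by exactly one word of $S$ (equivalently, $L_{\mathbf w}$ viewed as a tree is regular of the same arity as $\mathfrak j$, the arity being the number of legitimate children of the last trunk edge). *)

From HB Require Import structures.
From mathcomp Require Import all_boot all_order all_algebra.
From mathcomp Require Import boolp.
Set Implicit Arguments. Unset Strict Implicit. Unset Printing Implicit Defensive.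

(* A Mealy automaton (Q, Sigma, delta, rho) is given by finite types Q, Sig and
   delta i : Q -> Q (i : Sig), rho x : Sig -> Sig (x : Q);
   transition x --i|rho x i--> delta i x. *)
Section Mealy.
Variables (Q Sig : finType) (delta : Sig -> Q -> Q) (rho : Q -> Sig -> Sig).

Definition invertible := forall x : Q, bijective (rho x).
Definition reversible := forall i : Sig, bijective (delta i).
(* rho_x^{-1}(j) (meaningful when rho x is a permutation) *)
Definition rho_inv (x : Q) (j : Sig) : Sig := odflt j [pick i | rho x i == j].
Definition bireversible :=
  [/\ invertible, reversible & forall j : Sig, bijective (fun x => delta (rho_inv x j) x)].

Definition qedge : rel Q := fun x y => [exists i, delta i x == y].
Definition connected_automaton :=
  forall x y : Q, connect (fun a b => qedge a b || qedge b a) x y.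

Fixpoint dw (i : Sig) (u : seq Q) : seq Q :=
  if u is x :: u' then delta i x :: dw (rho x i) u' else [::].
Definition ds (s : seq Sig) (u : seq Q) : seq Q := foldl (fun w i => dw i w) u s.

(* vertices of the orbit tree: orbits of Q^n under the delta_s, s in Sig^* *)
Definition same_comp (u v : seq Q) := exists s : seq Sig, ds s u = v.
Definition compset (u : seq Q) : {set (size u).-tuple Q} :=
  [set t | `[< exists s : seq Sig, ds s u = tval t >]].

(* Edges are represented by a word of their bottom vertex; the top vertex is
   the component of its prefix of length one less.  Label = #bottom/#top. *)
Definition label (u w : seq Q) : rat := ((#|compset w|)%:R / (#|compset u|)%:R)%R.
Definition edge_label (w : seq Q) : rat := label (take (size w).-1 w) w.

Definition liftable (e f : seq Q) :=
  forall w, same_comp e w -> exists p s, w = p ++ s /\ same_comp f s.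

(* a branch: sequence of vertices (given by representatives b l of length l),
   b (l+1) being a child of b l *)
Definition branch (b : nat -> seq Q) :=
  forall l, size (b l) = l /\
            exists u x, same_comp u (b l) /\ same_comp (rcons u x) (b l.+1).
Definition branch_label (b : nat -> seq Q) (l : nat) : rat := label (b l) (b l.+1).
Definition active_branch (b : nat -> seq Q) :=
  ~ exists N, forall l, (N <= l)%N -> branch_label b l = 1%R.
(* edge of b at level l has bottom b (l+1); paths in a path are its segments,
   and segment lifting is edgewise *)
Definition self_liftable_branch (b : nat -> seq Q) :=
  exists k, (0 < k)%N /\
    forall i l, liftable (b (i + k + l).+1) (b (i + l).+1).

(* finite initial path represented by a word e (its edges at level j < size e
   have bottom vertex the component of take j.+1 e) *)
Definition one_self_liftable (e : seq Q) :=
  forall i l, (i + 1 + l < size e)%N -> liftable (take (i + 1 + l).+1 e) (take (i + l).+1 e).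

Definition legit_child_last (e f : seq Q) :=
  [/\ size f = (size e).+1, same_comp (take (size e) f) e & liftable f e].

Definition jungle_trunk (e : seq Q) :=
  [/\ (0 < size e)%N, one_self_liftable e,
      (exists f1 f2, [/\ legit_child_last e f1, legit_child_last e f2 & ~ same_comp f1 f2])
    & (forall f, legit_child_last e f -> edge_label f = 1%R)].

Definition in_jungle (e w : seq Q) :=
  ((0 < size w <= size e)%N /\ same_comp w (take (size w) e)) \/
  [/\ (size e < size w)%N, same_comp (take (size e) w) e & liftable w e].

Definition jword (e w : seq Q) :=
  forall l, (0 < l <= size w)%N -> in_jungle e (take l w).

(* a liana covering up j(e) (finite words part) *)
Definition liana (e : seq Q) (S : seq Q -> Prop) :=
  exists (w : seq Q) (L : seq Q -> Prop),
    [/\ same_comp w e,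
        (forall l l', L (l ++ l') -> L l),
        (forall s, S s <-> (prefix s w \/ exists l, L l /\ s = w ++ l)),
        (forall s, S s -> jword e s)
      & (forall v, jword e v -> exists! s, S s /\ same_comp s v)].

End Mealy.

From mathcomp Require Import all_boot all_order all_algebra boolp zify.
Set Implicit Arguments. Unset Strict Implicit. Unset Printing Implicit Defensive.

(* Read a word of length at least n as the sequence of its factors of length
   n ("states"): a long j-word is then a chain whose steps, the factors of
   length n+1, are legitimate children of the last trunk edge.  Since these
   children have label 1, a child is determined within its component by its
   first n letters, and also by its last n ones, both lying in the component
   of the stem.  Hence each component of children permutes the states, so
   every path of the jungle tree can be continued back to any state it has
   passed, e.g. the one just before an occurrence of u, after which u can be
   read again.  Being determined by a prefix of length n, such a continuation
   of a word of the liana S is again in S, as S has one word per vertex. *)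

Import GRing.Theory Num.Theory.

Lemma drop_take (T : Type) k l (s : seq T) : drop k (take l s) = take (l - k) (drop k s).
Proof.
case: (leqP k l) => hkl; first by rewrite take_drop subnK.
rewrite drop_oversize; last by rewrite size_take_min geq_min ltnW.
by rewrite (_ : l - k = 0)%N ?take0 //; lia.
Qed.

Section Words.
Variables (Q Sig : finType) (delta : Sig -> Q -> Q) (rho : Q -> Sig -> Sig).
Local Notation dw := (dw delta rho).
Local Notation ds := (ds delta rho).
Local Notation same_comp := (same_comp delta rho).
Local Notation compset := (compset delta rho).
Local Notation liftable := (liftable delta rho).

Fixpoint rhow (u : seq Q) (i : Sig) : Sig :=
  if u is x :: u' then rhow u' (rho x i) else i.

Fixpoint rhos (u : seq Q) (s : seq Sig) : seq Sig :=
  if s is i :: s' then rhow u i :: rhos (dw i u) s' else [::].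

Lemma size_dw i u : size (dw i u) = size u.
Proof. by elim: u i => [|x u IH] i //=; rewrite IH. Qed.

Lemma size_ds s u : size (ds s u) = size u.
Proof. by elim: s u => [|i s IH] u //=; rewrite IH size_dw. Qed.

Lemma ds_cat s1 s2 u : ds (s1 ++ s2) u = ds s2 (ds s1 u).
Proof. exact: foldl_cat. Qed.

Lemma dw_cat i u v : dw i (u ++ v) = dw i u ++ dw (rhow u i) v.
Proof. by elim: u i => [|x u IH] i //=; rewrite IH. Qed.

Lemma ds_catr s u v : ds s (u ++ v) = ds s u ++ ds (rhos u s) v.
Proof. by elim: s u v => [|i s IH] u v //=; rewrite dw_cat IH. Qed.

Lemma take_ds s k u : take k (ds s u) = ds s (take k u).
Proof.
case: (leqP k (size u)) => hk; last by rewrite !take_oversize ?size_ds // ltnW.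
by rewrite -{1}(cat_take_drop k u) ds_catr take_size_cat // size_ds size_takel.
Qed.

Lemma drop_ds s k u : drop k (ds s u) = ds (rhos (take k u) s) (drop k u).
Proof.
case: (leqP k (size u)) => hk.
  by rewrite -{1}(cat_take_drop k u) ds_catr drop_size_cat // size_ds size_takel.
have hk' : (size u <= k)%N by apply: ltnW.
by rewrite !drop_oversize ?size_ds //; apply/esym/size0nil; rewrite size_ds.
Qed.

Lemma ds_flatten_nseq k s u : ds (flatten (nseq k s)) u = iter k (ds s) u.
Proof. by elim: k u => [|k IH] u //=; rewrite ds_cat IH -iterSr. Qed.

Lemma same_comp_refl u : same_comp u u.
Proof. by exists [::]. Qed.

Lemma same_comp_trans u v w : same_comp u v -> same_comp v w -> same_comp u w.
Proof. by case=> s1 <- [s2 <-]; exists (s1 ++ s2); rewrite ds_cat. Qed.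

Lemma same_comp_size u v : same_comp u v -> size v = size u.
Proof. by case=> s <-; rewrite size_ds. Qed.

Lemma same_comp_take k u v : same_comp u v -> same_comp (take k u) (take k v).
Proof. by case=> s <-; exists s; rewrite take_ds. Qed.

Lemma same_comp_drop k u v : same_comp u v -> same_comp (drop k u) (drop k v).
Proof. by case=> s <-; exists (rhos (take k u) s); rewrite drop_ds. Qed.

Lemma drop_liftable f z k : same_comp f (drop k z) -> liftable z f.
Proof.
move=> hf w hw; exists (take k w), (drop k w); rewrite cat_take_drop.
by split=> //; apply: same_comp_trans hf (same_comp_drop k hw).
Qed.

Lemma liftable_drop f z : liftable z f -> same_comp f (drop (size z - size f) z).
Proof.
move=> /(_ z (same_comp_refl z)) [p [s [-> hs]]].
by rewrite size_cat (same_comp_size hs) addnK drop_size_cat.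
Qed.

Definition comp_tuple z s : (size z).-tuple Q := insubd (in_tuple z) (ds s z).

Lemma val_comp_tuple z s : val (comp_tuple z s) = ds s z.
Proof. by rewrite val_insubd size_ds eqxx. Qed.

Lemma in_compsetP z (t : (size z).-tuple Q) :
  reflect (exists s, ds s z = val t) (t \in compset z).
Proof. by rewrite inE; apply: asboolP. Qed.

Lemma comp_tuple_in z s : comp_tuple z s \in compset z.
Proof. by apply/in_compsetP; exists s; rewrite val_comp_tuple. Qed.

Hypothesis rev : reversible delta.

Lemma dw_inj i : injective (dw i).
Proof.
move=> u; elim: u i => [|x u IH] i [|y v] //= [hxy huv].
have [g gK _] := rev i; have exy : x = y by rewrite -(gK x) hxy gK.
by subst y; rewrite (IH _ _ huv).
Qed.

Lemma ds_inj s : injective (ds s).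
Proof. by elim: s => [|i s IH] u v //= /IH /dw_inj. Qed.

(* ds s permutes the finitely many words of length size u, so a power of it
   undoes it. *)
Lemma same_comp_sym u v : same_comp u v -> same_comp v u.
Proof.
case=> s <-; pose F (t : (size u).-tuple Q) : (size u).-tuple Q := insubd t (ds s t).
have valF t : val (F t) = ds s t by rewrite val_insubd size_ds size_tuple eqxx.
have F_inj : injective F.
  by move=> t1 t2 /(congr1 val); rewrite !valF => /ds_inj /val_inj.
have iterF k t : val (iter k F t) = iter k (ds s) t.
  by elim: k => //= k <-; rewrite valF.
exists (flatten (nseq (order F (in_tuple u)).-1 s)).
by rewrite ds_flatten_nseq -iterSr orderSpred -(iterF _ (in_tuple u)) iter_order.
Qed.

Lemma card_compset_same_comp u v : same_comp u v -> #|compset u| = #|compset v|.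
Proof.
move=> huv; have card_at m w : size w = m ->
    #|compset w| = #|[set t : m.-tuple Q | `[< same_comp w (val t) >]]| by move=> <-.
rewrite (card_at _ u erefl) (card_at _ v (same_comp_size huv)).
apply: eq_card => t; rewrite !inE; apply/asboolP/asboolP.
  exact: same_comp_trans (same_comp_sym huv).
exact: same_comp_trans huv.
Qed.

Hypothesis inv : invertible rho.

Lemma rhow_surj u j : exists i, rhow u i = j.
Proof.
elim: u j => [|x u IH] j; first by exists j.
have [i hi] := IH j; have [g _ gK] := inv x.
by exists (g i) => /=; rewrite gK.
Qed.

Lemma rhos_surj u s' : exists s, rhos u s = s'.
Proof.
elim: s' u => [|j s' IH] u; first by exists [::].
have [i hi] := rhow_surj u j; have [s hs] := IH (dw i u).
by exists (i :: s) => /=; rewrite hi hs.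
Qed.

Lemma compset_map_inj z z' (f : seq Q -> seq Q) :
    (forall s, exists s', f (ds s z) = ds s' z') ->
    (forall s', exists s, f (ds s z) = ds s' z') ->
    #|compset z| = #|compset z'| ->
  forall s1 s2, f (ds s1 z) = f (ds s2 z) -> ds s1 z = ds s2 z.
Proof.
move=> f_to f_onto card_eq s1 s2 hf.
pose F (t : (size z).-tuple Q) : (size z').-tuple Q := insubd (in_tuple z') (f (val t)).
have valF s : val (F (comp_tuple z s)) = f (ds s z).
  by rewrite /F val_comp_tuple; have [s' ->] := f_to s; rewrite val_insubd size_ds eqxx.
have F_inj : {in compset z &, injective F}.
  apply/imset_injP; rewrite eqn_leq leq_imset_card card_eq /=.
  apply/subset_leq_card/subsetP => t /in_compsetP [s' hs'].
  have [s hs] := f_onto s'.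
  apply/imsetP; exists (comp_tuple z s); first exact: comp_tuple_in.
  by apply: val_inj; rewrite valF hs hs'.
rewrite -!val_comp_tuple; congr val; apply: F_inj; rewrite ?comp_tuple_in //.
by apply: val_inj; rewrite !valF.
Qed.

Lemma compset_take_inj z k : #|compset z| = #|compset (take k z)| ->
  forall s1 s2, take k (ds s1 z) = take k (ds s2 z) -> ds s1 z = ds s2 z.
Proof. by apply: compset_map_inj => s; exists s; rewrite take_ds. Qed.

Lemma compset_drop_inj z k : #|compset z| = #|compset (drop k z)| ->
  forall s1 s2, drop k (ds s1 z) = drop k (ds s2 z) -> ds s1 z = ds s2 z.
Proof.
apply: compset_map_inj => [s|s']; first by exists (rhos (take k z) s); rewrite drop_ds.
by have [s <-] := rhos_surj (take k z) s'; exists s; rewrite drop_ds.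
Qed.

End Words.

Section Jungle.
Variables (Q Sig : finType) (delta : Sig -> Q -> Q) (rho : Q -> Sig -> Sig).
Local Notation ds := (ds delta rho).
Local Notation same_comp := (same_comp delta rho).
Local Notation compset := (compset delta rho).
Hypothesis inv : invertible rho.
Hypothesis rev : reversible delta.
Variable e : seq Q.
Local Notation n := (size e).
Hypothesis n_gt0 : (0 < n)%N.
Local Notation child := (legit_child_last delta rho e).
Hypothesis child_label : forall f, child f -> edge_label delta rho f = 1%R.

Lemma child_size z : child z -> size z = n.+1.
Proof. by case. Qed.

Lemma child_take z : child z -> same_comp e (take n z).
Proof. by case=> _ /(same_comp_sym rev). Qed.

Lemma child_drop z : child z -> same_comp e (drop 1 z).
Proof. by case=> hz _ /liftable_drop; rewrite hz subSnn. Qed.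

Lemma child_same_comp z z' : child z -> same_comp z z' -> child z'.
Proof.
case=> hs hh hl hzz'; split.
- by rewrite (same_comp_size hzz').
- exact: same_comp_trans (same_comp_sym rev (same_comp_take n hzz')) hh.
- by move=> w hw; apply: hl; apply: same_comp_trans hzz' hw.
Qed.

Lemma card_child_take z : child z -> #|compset z| = #|compset (take n z)|.
Proof.
move=> hz; have := child_label hz; rewrite /edge_label /label.
have -> : (size z).-1 = n by rewrite (child_size hz).
by move/divr1_eq/eqP; rewrite eqr_nat => /eqP.
Qed.

Lemma child_take_inj z s1 s2 : child z ->
  take n (ds s1 z) = take n (ds s2 z) -> ds s1 z = ds s2 z.
Proof. by move=> hz; apply: (compset_take_inj (card_child_take hz)). Qed.

(* The prefix and the suffix of a child both lie in the component of the
   stem, so the label-1 condition also makes the suffix determine the child. *)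
Lemma child_drop_inj z s1 s2 : child z ->
  drop 1 (ds s1 z) = drop 1 (ds s2 z) -> ds s1 z = ds s2 z.
Proof.
move=> hz; apply: (compset_drop_inj inv); rewrite (card_child_take hz).
apply: (card_compset_same_comp rev).
exact: same_comp_trans (same_comp_sym rev (child_take hz)) (child_drop hz).
Qed.

Definition jchain W := [/\ (n <= size W)%N, same_comp e (take n W) &
  forall k, (k + n < size W)%N -> child (take n.+1 (drop k W))].

Definition last_state (W : seq Q) := drop (size W - n) W.

Lemma last_state_cat X Y : (n <= size Y)%N -> last_state (X ++ Y) = last_state Y.
Proof.
by move=> hY; rewrite /last_state size_cat drop_cat ifF; [congr drop | apply/negbTE]; lia.
Qed.

Lemma last_state_drop i X : (i + n <= size X)%N -> last_state (drop i X) = last_state X.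
Proof. by move=> hX; rewrite /last_state drop_drop size_drop; congr drop; lia. Qed.

Lemma jchain_state W k : jchain W -> (k + n <= size W)%N ->
  same_comp e (take n (drop k W)).
Proof.
case=> _ h0 hW; case: k => [|k] hk; first by rewrite drop0.
have := child_drop (hW k ltac:(lia)).
by rewrite -[n.+1]addn1 -take_drop drop_drop add1n.
Qed.

Lemma jchain_take W l : jchain W -> (n <= l)%N -> jchain (take l W).
Proof.
case=> hs h0 hW hl; split; first by rewrite size_take_min leq_min hl.
  by rewrite take_takel.
move=> k; rewrite size_take_min => hk.
rewrite drop_take take_takel; last by lia.
by apply: hW; lia.
Qed.

Lemma jchain_drop W i : jchain W -> (i + n <= size W)%N -> jchain (drop i W).
Proof.
move=> hW hi; have [hs _ hw] := hW; split.
- by rewrite size_drop; lia.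
- exact: jchain_state.
- by move=> k; rewrite size_drop drop_drop => hk; apply: hw; lia.
Qed.

Lemma state_jchain w : size w = n -> same_comp e w -> jchain w.
Proof. by move=> hw hew; split; rewrite ?hw ?take_oversize ?hw // => k; lia. Qed.

Lemma child_jchain z : child z -> jchain z.
Proof.
move=> hz; have sz := child_size hz; split; first by rewrite sz.
  exact: child_take.
move=> k; rewrite sz => hk; have -> : k = 0 by lia.
by rewrite drop0 take_oversize ?sz.
Qed.

Lemma jchain_glue X Y : jchain X -> jchain Y -> last_state X = take n Y ->
  jchain (X ++ drop n Y) /\ last_state (X ++ drop n Y) = last_state Y.
Proof.
move=> [hsX h0X hwX] [hsY h0Y hwY] hXY.
set A := take (size X - n) X.
have sA : size A = (size X - n)%N by rewrite size_takel //; lia.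
have EXY : X ++ drop n Y = A ++ Y.
  by rewrite -{1}(cat_take_drop (size X - n) X) -/A -/(last_state X) hXY -catA cat_take_drop.
have szAY : size (A ++ Y) = (size A + size Y)%N by rewrite size_cat.
split; first split.
- by rewrite EXY szAY; lia.
- by rewrite takel_cat.
- move=> k; rewrite EXY szAY => hk; case: (ltnP k (size A)) => hkA.
    rewrite -EXY drop_cat ifT; last by lia.
    by rewrite takel_cat; [apply: hwX | rewrite size_drop]; lia.
  by rewrite drop_cat ltnNge hkA /=; apply: hwY; lia.
- by rewrite EXY last_state_cat.
Qed.

Local Notation jword := (jword delta rho e).

Lemma jword_state W k : jword W -> (k + n <= size W)%N ->
  same_comp e (take n (drop k W)).
Proof.
move=> hJ hk; have /hJ : (0 < k + n <= size W)%N by lia.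
rewrite /in_jungle size_takel //; case=> [[hkn]|[_ _ /liftable_drop]].
  have -> : k = 0 by lia.
  by rewrite drop0 add0n take_size => /(same_comp_sym rev).
by rewrite size_takel // addnK take_drop addnC.
Qed.

Lemma jword_jchain W : jword W -> (n <= size W)%N -> jchain W.
Proof.
move=> hJ hW; split=> // [|k hk].
  by have := jword_state (k := 0) hJ hW; rewrite drop0.
split; first by rewrite size_takel // size_drop; lia.
  by rewrite take_takel //; apply/(same_comp_sym rev)/jword_state => //; lia.
apply: (drop_liftable (k := 1)).
rewrite -[n.+1]addn1 -take_drop drop_drop add1n; apply: jword_state hJ _; lia.
Qed.

Lemma jchain_jword W : jchain W -> jword W.
Proof.
move=> hW l /andP[l_gt0 lW]; have [_ h0 _] := hW.
rewrite /in_jungle size_takel //; case: (leqP l n) => hln; [left | right].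
  split; first by rewrite l_gt0.
  by rewrite -(take_takel _ hln); apply: same_comp_take; apply: (same_comp_sym rev).
split=> //; first by rewrite take_takel ?(ltnW hln) //; apply: (same_comp_sym rev).
apply: (drop_liftable (k := l - n)); rewrite drop_take.
by rewrite (_ : l - (l - n) = n)%N; [apply: jchain_state hW _; lia | lia].
Qed.

Section Shift.
Variable z : seq Q.
Hypothesis z_child : child z.

Definition state_tuple (w : seq Q) : n.-tuple Q := insubd (in_tuple e) w.

Lemma val_state_tuple w : size w = n -> val (state_tuple w) = w.
Proof. by move=> hw; rewrite val_insubd hw eqxx. Qed.

(* Well defined on the component of the stem by child_take_inj, and the
   identity elsewhere. *)
Definition shift (x : n.-tuple Q) : n.-tuple Q :=
  if [pick t in compset z | take n (val t) == val x] is Some t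
  then state_tuple (drop 1 (val t)) else x.

Lemma compset_child t : t \in compset z -> child (val t).
Proof. by case/in_compsetP=> s <-; apply: child_same_comp z_child _; exists s. Qed.

Lemma compset_take_state (x : n.-tuple Q) : same_comp e (val x) ->
  exists2 t, t \in compset z & take n (val t) = val x.
Proof.
move=> hx; have [s hs] := same_comp_trans (same_comp_sym rev (child_take z_child)) hx.
by exists (comp_tuple delta rho z s); rewrite ?comp_tuple_in // val_comp_tuple take_ds.
Qed.

Lemma shift_val (x : n.-tuple Q) t : t \in compset z -> take n (val t) = val x ->
  val (shift x) = drop 1 (val t).
Proof.
move=> hzt htx; rewrite /shift; case: pickP => [t' /andP [hzt' /eqP ht'x]|]; last first.
  by move=> /(_ t); rewrite hzt htx eqxx.
rewrite val_state_tuple; last by rewrite size_drop size_tuple (child_size z_child) subn1.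
case/in_compsetP: hzt => s1 hs1; case/in_compsetP: hzt' => s2 hs2.
suff -> : val t' = val t by [].
by rewrite -hs1 -hs2; apply: child_take_inj z_child _; rewrite hs1 hs2 ht'x htx.
Qed.

Lemma shift_state (x : n.-tuple Q) : same_comp e (val x) -> same_comp e (val (shift x)).
Proof.
move=> hx; have [t hzt htx] := compset_take_state hx.
by rewrite (shift_val hzt htx); apply: child_drop (compset_child hzt).
Qed.

Lemma shift_out (x : n.-tuple Q) : ~ same_comp e (val x) -> shift x = x.
Proof.
move=> hx; rewrite /shift; case: pickP => [t /andP [hzt /eqP htx]|//].
by case: hx; rewrite -htx; apply: child_take (compset_child hzt).
Qed.

Lemma shift_inj : injective shift.
Proof.
move=> x y hxy.
case: (pselect (same_comp e (val x))) => hx; case: (pselect (same_comp e (val y))) => hy.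
- have [[tx hzx ex] [ty hzy ey]] := (compset_take_state hx, compset_take_state hy).
  have := congr1 val hxy; rewrite (shift_val hzx ex) (shift_val hzy ey).
  case/in_compsetP: hzx => s1 hs1; case/in_compsetP: hzy => s2 hs2.
  rewrite -hs1 -hs2 => /(child_drop_inj z_child) h.
  by apply: val_inj; rewrite -ex -ey -hs1 -hs2 h.
- by exfalso; apply: (hy); rewrite -[y](shift_out hy) -hxy; apply: shift_state.
- by exfalso; apply: (hx); rewrite -[x](shift_out hx) hxy; apply: shift_state.
- by rewrite -(shift_out hx) -(shift_out hy).
Qed.

Lemma jchain_iter_shift k (x : n.-tuple Q) : same_comp e (val x) ->
  exists Y, [/\ jchain Y, take n Y = val x & last_state Y = val (iter k shift x)].
Proof.
move=> hx; elim: k => [|k [Y [hY hYx hYk]]].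
  exists (val x); split; first exact: state_jchain (size_tuple x) hx.
    by rewrite take_oversize ?size_tuple.
  by rewrite /last_state size_tuple subnn drop0.
have hxk : same_comp e (val (iter k shift x)) by elim: (k) => //= j /shift_state.
have [t hzt ht] := compset_take_state hxk.
have [hg hl] := jchain_glue hY (child_jchain (compset_child hzt)) (etrans hYk (esym ht)).
exists (Y ++ drop n (val t)); split=> //; first by rewrite takel_cat //; case: hY.
rewrite hl /= (shift_val hzt ht) /last_state (child_size (compset_child hzt)).
by rewrite subSnn.
Qed.

Lemma child_return : exists Y, [/\ jchain Y, take n Y = drop 1 z & last_state Y = take n z].
Proof.
have hzn : size (take n z) = n by rewrite size_takel // (child_size z_child).
pose a := state_tuple (take n z).
have ha : same_comp e (val a) by rewrite val_state_tuple //; apply: child_take.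
have shift_a : val (shift a) = drop 1 z.
  rewrite (shift_val (comp_tuple_in delta rho z [::])) val_comp_tuple //.
  by rewrite val_state_tuple.
have [Y [hY hY1 hY2]] := jchain_iter_shift (order shift a).-1 (shift_state ha).
exists Y; split=> //; first by rewrite hY1.
by rewrite hY2 -iterSr orderSpred (iter_order shift_inj) val_state_tuple.
Qed.

End Shift.

Lemma jchain_return W : jchain W ->
  exists Y, [/\ jchain Y, take n Y = last_state W & last_state Y = take n W].
Proof.
move=> hW; have [k hk] : exists k, size W = (k + n)%N.
  by case: hW => hs _ _; exists (size W - n)%N; rewrite subnK.
elim: k W hW hk => [|k IH] W hW hk.
  exists W; rewrite /last_state hk add0n subnn drop0 take_oversize ?hk //.
have kW : (k + n <= size W)%N by lia.
have [Y' [hY' hY'1 hY'2]] := IH _ (jchain_take hW (leq_addl k n)) (size_takel kW).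
have hz_child : child (take n.+1 (drop k W)) by case: hW => _ _; apply; lia.
have [Y1 [hY1 hY11 hY12]] := child_return hz_child.
have e1 : take n (take n.+1 (drop k W)) = take n Y'.
  by rewrite hY'1 take_takel // /last_state size_takel ?hk // addnK drop_take addKn.
have [hg hl] := jchain_glue hY1 hY' (etrans hY12 e1).
exists (Y1 ++ drop n Y'); split=> //; last by rewrite hl hY'2 take_takel // leq_addl.
rewrite takel_cat; last by case: hY1.
rewrite hY11 drop_take /last_state hk addnK drop_drop take_oversize //.
by rewrite size_drop hk; lia.
Qed.

Lemma jchain_cons f P : child f -> jchain P -> exists x, jchain (x :: P).
Proof.
move=> hf hP; have [_ h0 _] := hP.
have [s hs] := same_comp_trans (same_comp_sym rev (child_drop hf)) h0.
have [s0 hs0] := rhos_surj delta inv (take 1 f) s.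
set f' := ds s0 f; have hf' : child f' by apply: child_same_comp hf _; exists s0.
have f'_drop : drop 1 f' = take n P by rewrite drop_ds hs0.
have lf' : last_state f' = take n P.
  by rewrite -f'_drop /last_state (child_size hf') subSnn.
have [hg _] := jchain_glue (child_jchain hf') hP lf'.
have : size (take 1 f') = 1 by rewrite size_takel // (child_size hf').
move: hg; rewrite -[f' in f' ++ _](cat_take_drop 1) f'_drop -catA cat_take_drop.
by case: (take 1 f') => [|x [|y r]] //= hx _; exists x.
Qed.

Lemma jchain_catl f k P : child f -> jchain P -> exists c, size c = k /\ jchain (c ++ P).
Proof.
move=> hf hP; elim: k => [|k [c [hc hcP]]]; first by exists [::].
by have [x hx] := jchain_cons hf hcP; exists (x :: c); rewrite /= hc.
Qed.

(* Extending P to the left makes the state preceding u available; walking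
   back from the end of P to that state, u can then be read again. *)
Lemma jchain_extend_infix f P a u b : child f -> jchain P -> P = a ++ u ++ b ->
  exists w, jchain (P ++ w ++ u).
Proof.
move=> hf hP EP; have [hsP _ _] := hP.
have [c [hc hcP]] := jchain_catl n hf hP.
set G := drop (size a) (c ++ a).
have sG : size G = n by rewrite size_drop size_cat hc addnK.
have ED : drop (size a) (c ++ P) = G ++ u ++ b.
  by rewrite EP catA drop_cat size_cat hc ifT //; lia.
have hsa : (size a + n <= size (c ++ P))%N by rewrite size_cat hc EP size_cat; lia.
have hD : jchain (G ++ u ++ b) by rewrite -ED; apply: jchain_drop.
have [Y [hY hY1 hY2]] := jchain_return hD.
have lD : last_state (G ++ u ++ b) = last_state P.
  by rewrite -ED last_state_drop // last_state_cat.
have [hPY hlPY] := jchain_glue hP hY (etrans (esym lD) (esym hY1)).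
have hGu : jchain (G ++ u).
  have := jchain_take hD (leq_addr (size u) n).
  by rewrite catA takel_cat ?take_oversize // size_cat sG.
have lPY : last_state (P ++ drop n Y) = take n (G ++ u).
  by rewrite hlPY hY2 !take_size_cat.
have [hPYu _] := jchain_glue hPY hGu lPY.
by exists (drop n Y); move: hPYu; rewrite drop_size_cat // -catA.
Qed.

Lemma jchain_fix_step W g k : jchain W -> (n <= k < size W)%N ->
  ds g (take k W) = take k W -> ds g (take k.+1 W) = take k.+1 W.
Proof.
move=> [_ _ hW] /andP[nk kW] hfix.
set m := (k - n)%N; have z_child := hW m ltac:(lia).
set z := take n.+1 (drop m W) in z_child.
have Ek1 : take k.+1 W = take m W ++ z by rewrite -takeD; congr take; lia.
have Ek : take k W = take m W ++ take n z by rewrite take_takel // -takeD; congr take; lia.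
move: hfix; rewrite Ek Ek1 !ds_catr => /eqP; rewrite eqseq_cat ?size_ds //.
case/andP=> /eqP -> /eqP hz; congr (_ ++ _).
by apply: (child_take_inj (s2 := [::]) z_child); rewrite take_ds hz.
Qed.

(* Children being determined by their first n letters, a word of the jungle
   tree is determined within its component by any prefix of length >= n. *)
Lemma jchain_fix W g k : jchain W -> (n <= k <= size W)%N ->
  ds g (take k W) = take k W -> ds g W = W.
Proof.
move=> hW /andP[nk kW] hfix.
have fix_k d : (k + d <= size W)%N -> ds g (take (k + d) W) = take (k + d) W.
  elim: d => [|d IH] hd; first by rewrite addn0.
  by rewrite addnS; apply: jchain_fix_step hW _ (IH _); lia.
by have := fix_k (size W - k)%N; rewrite subnKC // take_size; apply.
Qed.

Lemma liana_take S s k : liana delta rho e S -> S s -> S (take k s).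
Proof.
case=> w0 [L [_ L_prefix S_def _ _]] /S_def [sw0|[l [Ll ->]]]; apply/S_def.
  by left; apply: prefix_trans (prefix_take _ _) sw0.
case: (leqP k (size w0)) => hk; first by left; rewrite takel_cat // prefix_take.
right; exists (take (k - size w0) l); split; last by rewrite take_cat ltnNge (ltnW hk).
by apply: (L_prefix _ (drop (k - size w0) l)); rewrite cat_take_drop.
Qed.

Lemma liana_jchain_prefix S p : liana delta rho e S -> S p ->
  exists P, [/\ S P, jchain P & prefix p P].
Proof.
case=> w0 [L [w0e _ S_def S_jword _]] Sp.
have S_jchain P : S P -> (n <= size P)%N -> jchain P.
  by move=> SP; apply: jword_jchain (S_jword _ SP).
case/S_def: (Sp) => [pw0|[l [_ Ep]]].
  have Sw0 : S w0 by apply/S_def; left; apply: prefix_refl.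
  by exists w0; split=> //; apply: S_jchain; rewrite ?(same_comp_size w0e).
exists p; split=> //; last exact: prefix_refl.
by apply: S_jchain; rewrite // Ep size_cat -(same_comp_size w0e) leq_addr.
Qed.

Lemma liana_extend S P W : liana delta rho e S -> S P -> (n <= size P)%N ->
  jchain W -> prefix P W -> S W.
Proof.
move=> hS SP nP hW /prefixP [r EW]; subst W.
have [w0 [L [_ _ _ S_jword S_unique]]] := hS.
have [s [[Ss sW] _]] := S_unique _ (jchain_jword hW).
have take_s : take (size P) s = P.
  have [s' [_ s'_unique]] := S_unique _ (S_jword _ SP).
  have -> : take (size P) s = s'.
    symmetry; apply: s'_unique; split; first exact: liana_take hS Ss.
    by rewrite -[X in same_comp _ X](take_size_cat r (erefl (size P))); apply: same_comp_take.
  by apply: s'_unique; split=> //; apply: same_comp_refl.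
have [g hg] := same_comp_sym rev sW.
suff fixW : ds g (P ++ r) = P ++ r by rewrite -fixW hg.
apply: (jchain_fix hW (k := size P)); first by rewrite nP size_cat leq_addr.
by rewrite -take_ds hg take_s take_size_cat.
Qed.

Lemma liana_reread f S t u v : child f -> liana delta rho e S -> S (t ++ u ++ v) ->
  exists w, S (t ++ u ++ v ++ w ++ u).
Proof.
move=> f_child hS Sp.
have [P [SP hP /prefixP [r EP]]] := liana_jchain_prefix hS Sp.
have EP' : P = t ++ u ++ v ++ r by rewrite EP -!catA.
have [w hw] := jchain_extend_infix f_child hP EP'.
exists (r ++ w); have -> : t ++ u ++ v ++ (r ++ w) ++ u = P ++ w ++ u by rewrite EP' -!catA.
by apply: liana_extend hS SP _ hw (prefix_prefix _ _); case: hP.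
Qed.

End Jungle.

Theorem theorem5p7 (Q Sig : finType) (delta : Sig -> Q -> Q) (rho : Q -> Sig -> Sig) :
  (0 < #|Q|)%N -> (0 < #|Sig|)%N ->
  connected_automaton delta -> bireversible delta rho ->
  (forall b, branch delta rho b -> active_branch delta rho b ->
             ~ self_liftable_branch delta rho b) ->
  forall e : seq Q, jungle_trunk delta rho e ->
  forall S : seq Q -> Prop, liana delta rho e S ->
  forall t u v : seq Q, S (t ++ u ++ v) ->
  exists w : seq Q, S (t ++ u ++ v ++ w ++ u).
Proof.
move=> _ _ _ [inv rev _] _ e [n_gt0 _ [f [_ [f_child _ _]]] child_label] S hS t u v.
exact: (liana_reread inv rev n_gt0 child_label f_child hS).
Qed.
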